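(* Let $w$ be a function on pairs $(T,S)$ of equal-size subsets of $[n]$ with values in $\mathbb{R}\cup\{-\infty\}$ satisfying properties (i)–(v) below, such that $F(S)=w(\{1,\dots,|S|\},S)$ is submodular. Then $w(j,k)\ge w(j+1,k)$ for all $j,k$ with $1\le j<n$ and $1\le k\le n$.
   Context: Notation: $w(i,j)=w(\{i\},\{j\})$; $Ss=S\cup\{s\}$; an interval is a set of consecutive integers. For $S,T\in\binom{[n]}{k}$, $T=\{t_1<\dots<t_k\}$, $S\preceq T$ means $|\{s\in S:s\le t_j\}|\ge j$ for all $j$; $S\prec T$ means $S\preceq T$, $S\ne T$. Properties: (i) $w(\{1,\dots,|S|\},S)\ne-\infty$ for all $S$. (ii) $w(T,S)=-\infty$ whenever $S\prec T$. (iii) For any interval $I$ with $\max(I)<\min(T\cup S)$, $w(I\cup T,I\cup S)=\sum_{i\in I}w(i,i)+w(T,S)$. (iv) If $t,s>\max(S\cup T)$ then $w(Tt,Ss)=w(T,S)+w(t,s)$. (v) For fixed $S$, $|S|=k$, and any $R$ with $|R|=k-2$ and distinct $a,b,c,d\notin R$, the maximum of $w(R\cup\{a,b\},S)+w(R\cup\{c,d\},S)$, $w(R\cup\{a,c\},S)+w(R\cup\{b,d\},S)$, $w(R\cup\{a,d\},S)+w(R\cup\{b,c\},S)$ is attained at least twice. Submodular: $F(A\cap B)+F(A\cup B)\le F(A)+F(B)$. *)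

From HB Require Import structures.
From mathcomp Require Import all_boot all_order all_algebra.
From mathcomp Require Import constructive_ereal.
Set Implicit Arguments. Unset Strict Implicit. Unset Printing Implicit Defensive.
Import Order.TTheory GRing.Theory Num.Theory.

(* Convention: the ground set [n] = {1,...,n} is represented by 'I_n,
   the ordinal i standing for the integer  lab i = i + 1. *)
Definition lab n (i : 'I_n) : nat := (val i).+1.

(* the singleton {x} of [n], for an integer label x (empty if x not in [n]) *)
Definition pt n (x : nat) : {set 'I_n} := [set i : 'I_n | lab i == x].

Definition init n (m : nat) : {set 'I_n} := [set i : 'I_n | lab i <= m].

Definition labs n (T : {set 'I_n}) : seq nat := sort leq [seq lab i | i in T].

Definition tj n (T : {set 'I_n}) (j : nat) : nat := nth 0 (labs T) j.-1.

Definition preceq n (S T : {set 'I_n}) : Prop :=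
  forall j, 1 <= j <= #|T| -> j <= #|[set s in S | lab s <= tj T j]|.

Definition prec n (S T : {set 'I_n}) : Prop := preceq S T /\ S <> T.

Definition is_interval n (I : {set 'I_n}) : Prop :=
  exists a b : nat, I = [set i : 'I_n | a <= lab i < b].

Local Open Scope ereal_scope.

Definition max_twice (R : realDomainType) (x y z : \bar R) : Prop :=
  (x = y /\ z <= x) \/ (x = z /\ y <= x) \/ (y = z /\ x <= y).

Definition Fw (R : realDomainType) n (w : {set 'I_n} -> {set 'I_n} -> \bar R)
  (S : {set 'I_n}) : \bar R := w (init n #|S|) S.

Definition submodular (R : realDomainType) n (F : {set 'I_n} -> \bar R) : Prop :=
  forall A B : {set 'I_n}, F (A :&: B) + F (A :|: B) <= F A + F B.

(* values in R ∪ {-oo} on pairs of equal-size subsets *)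
Definition no_pinfty (R : realDomainType) n (w : {set 'I_n} -> {set 'I_n} -> \bar R) :=
  forall T S : {set 'I_n}, #|T| = #|S| -> w T S <> +oo.

Definition prop_i (R : realDomainType) n (w : {set 'I_n} -> {set 'I_n} -> \bar R) :=
  forall S : {set 'I_n}, w (init n #|S|) S <> -oo.

Definition prop_ii (R : realDomainType) n (w : {set 'I_n} -> {set 'I_n} -> \bar R) :=
  forall T S : {set 'I_n}, #|T| = #|S| -> prec S T -> w T S = -oo.

Definition prop_iii (R : realDomainType) n (w : {set 'I_n} -> {set 'I_n} -> \bar R) :=
  forall I T S : {set 'I_n}, #|T| = #|S| -> is_interval I ->
    (forall i x, i \in I -> x \in T :|: S -> (lab i < lab x)%N) ->
    w (I :|: T) (I :|: S) = \sum_(i in I) w [set i] [set i] + w T S.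

Definition prop_iv (R : realDomainType) n (w : {set 'I_n} -> {set 'I_n} -> \bar R) :=
  forall (T S : {set 'I_n}) (t s : 'I_n), #|T| = #|S| ->
    (forall x, x \in S :|: T -> (lab x < lab t)%N) ->
    (forall x, x \in S :|: T -> (lab x < lab s)%N) ->
    w (t |: T) (s |: S) = w T S + w [set t] [set s].

Definition prop_v (R : realDomainType) n (w : {set 'I_n} -> {set 'I_n} -> \bar R) :=
  forall (S R0 : {set 'I_n}) (a b c d : 'I_n),
    (2 <= #|S|)%N -> #|R0| = (#|S| - 2)%N ->
    uniq [:: a; b; c; d] ->
    a \notin R0 -> b \notin R0 -> c \notin R0 -> d \notin R0 ->
    max_twice (w (R0 :|: [set a; b]) S + w (R0 :|: [set c; d]) S)
              (w (R0 :|: [set a; c]) S + w (R0 :|: [set b; d]) S)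
              (w (R0 :|: [set a; d]) S + w (R0 :|: [set b; c]) S).

(* If k <= j then {k} strictly precedes {j+1}, so w(j+1,k) = -oo by (ii).
   Otherwise apply submodularity of F to A = [j] and B = [j-1] ∪ {k}: then
   A ∩ B = [j-1] and A ∪ B = [j] ∪ {k}, and by (iii) each of the four values
   of F is a diagonal sum  w(1,1) + ... + w(m,m)  plus one remaining term,
   namely w(∅,∅), w(j+1,k), w(∅,∅) and w(j,k).  By (i), and as w never takes
   the value +oo, the diagonal sums and w(∅,∅) are finite, so they cancel and
   leave w(j+1,k) <= w(j,k). *)
From HB Require Import structures.
From mathcomp Require Import all_boot all_order all_algebra.
From mathcomp Require Import constructive_ereal.
From mathcomp Require Import zify.
Set Implicit Arguments. Unset Strict Implicit. Unset Printing Implicit Defensive.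
Import Order.TTheory GRing.Theory Num.Theory.
Local Open Scope ereal_scope.

Lemma ptE n x (x_lt : (x.-1 < n)%N) : (0 < x)%N -> pt n x = [set Ordinal x_lt].
Proof.
move=> x_gt0; apply/setP => i; rewrite !inE /lab.
apply/eqP/eqP => [lab_i | ->]; last exact: prednK.
by apply: val_inj; rewrite /= -lab_i.
Qed.

Lemma card_pt n x : (0 < x <= n)%N -> #|pt n x| = 1%N.
Proof.
move=> /andP[x_gt0 x_le]; have x_lt : (x.-1 < n)%N by lia.
by rewrite (ptE x_lt x_gt0) cards1.
Qed.

Lemma initS n m : init n m.+1 = init n m :|: pt n m.+1.
Proof. by apply/setP => i; rewrite !inE /lab; lia. Qed.

Lemma card_init n m : (m <= n)%N -> #|init n m| = m.
Proof.
elim: m => [|m IHm] m_le.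
  by apply/eqP; rewrite cards_eq0; apply/eqP/setP => i; rewrite !inE /lab.
have m_lt : (m < n)%N by lia.
rewrite initS (@ptE n m.+1 m_lt) // setUC cardsU1 IHm ?(ltnW m_lt) //.
by rewrite inE /lab /=; lia.
Qed.

Lemma card_initU n m x : (m < x <= n)%N -> #|init n m :|: pt n x| = m.+1.
Proof.
move=> /andP[m_lt x_le]; have x_lt : (x.-1 < n)%N by lia.
rewrite (ptE x_lt) ?(leq_ltn_trans _ m_lt) // setUC cardsU1 card_init; last lia.
by rewrite inE /lab /=; lia.
Qed.

Lemma init_interval n m : is_interval (init n m).
Proof. by exists 0%N, m.+1; apply/setP => i; rewrite !inE. Qed.

Lemma prec_pt n x y : (0 < x < y)%N -> (y <= n)%N -> prec (pt n x) (pt n y).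
Proof.
move=> /andP[x_gt0 x_lt_y] y_le.
have x_lt : (x.-1 < n)%N by lia.
have y_lt : (y.-1 < n)%N by lia.
rewrite (ptE x_lt) // (ptE y_lt) ?(leq_ltn_trans _ x_lt_y) //; split.
  move=> j; rewrite cards1 => /andP[j_gt0 j_le1]; have -> : j = 1%N by lia.
  rewrite /tj /labs /image_mem enum_set1 /= card_gt0.
  by apply/set0Pn; exists (Ordinal x_lt); rewrite !inE eqxx /lab /=; lia.
by move/setP/(_ (Ordinal x_lt)); rewrite !inE eqxx => /esym/eqP[] /=; lia.
Qed.

Lemma submodular_init_pt (R : realDomainType) n (F : {set 'I_n} -> \bar R) m k :
  submodular F -> (m.+1 < k)%N ->
  F (init n m) + F (init n m.+1 :|: pt n k) <=
  F (init n m.+1) + F (init n m :|: pt n k).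
Proof.
move=> F_sub k_gt; have := F_sub (init n m.+1) (init n m :|: pt n k).
have -> : init n m.+1 :&: (init n m :|: pt n k) = init n m.
  by apply/setP => i; rewrite !inE /lab; lia.
have -> : init n m.+1 :|: (init n m :|: pt n k) = init n m.+1 :|: pt n k.
  by apply/setP => i; rewrite !inE /lab; lia.
by [].
Qed.

Lemma leeD_cancel (R : realDomainType) (a b c x y : \bar R) :
  a \is a fin_num -> b \is a fin_num -> c \is a fin_num ->
  (a + c) + (b + x) <= (b + c) + (a + y) -> x <= y.
Proof.
move=> a_fin b_fin c_fin.
have abc_fin : a + c + b \is a fin_num by rewrite !fin_numD a_fin b_fin c_fin.
have -> : b + c + (a + y) = a + c + b + y.
  by rewrite addeA [b + c + a]addeC addeA [a + b + c]addeAC.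
by rewrite addeA leeD2lE.
Qed.

Definition wdiag (R : realDomainType) n (w : {set 'I_n} -> {set 'I_n} -> \bar R)
  (m : nat) : \bar R := \sum_(i in init n m) w [set i] [set i].

Section Weights.
Variables (R : realDomainType) (n : nat) (w : {set 'I_n} -> {set 'I_n} -> \bar R).
Hypotheses (w_fin : no_pinfty w) (w_i : prop_i w) (w_ii : prop_ii w) (w_iii : prop_iii w).

Lemma w_initU (m : nat) (T S : {set 'I_n}) :
  #|T| = #|S| -> (forall x, x \in T :|: S -> (m < lab x)%N) ->
  w (init n m :|: T) (init n m :|: S) = wdiag w m + w T S.
Proof.
move=> card_TS TS_gt; apply: w_iii => //; first exact: init_interval.
by move=> i x; rewrite inE => lab_i /TS_gt; apply: leq_ltn_trans.
Qed.

Lemma Fw_init (m : nat) :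
  (m <= n)%N -> Fw w (init n m) = wdiag w m + w set0 set0.
Proof.
move=> m_le; rewrite /Fw card_init //.
by have := @w_initU m set0 set0; rewrite !setU0 cards0 => ->// x; rewrite inE.
Qed.

Lemma Fw_initU (m k : nat) :
  (m < k <= n)%N -> Fw w (init n m :|: pt n k) = wdiag w m + w (pt n m.+1) (pt n k).
Proof.
move=> mk; rewrite /Fw card_initU // initS w_initU //.
  by rewrite !card_pt //; lia.
by move=> x; rewrite !inE /lab => /orP[] /eqP; lia.
Qed.

Lemma Fw_fin (S : {set 'I_n}) : Fw w S \is a fin_num.
Proof.
rewrite fin_numE; apply/andP; split; apply/eqP; first exact: w_i.
by apply: w_fin; rewrite card_init // (leq_trans (max_card _)) ?card_ord.
Qed.

Lemma wdiag_fin (m : nat) :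
  (m <= n)%N -> wdiag w m \is a fin_num /\ w set0 set0 \is a fin_num.
Proof.
by move=> m_le; have := Fw_fin (init n m); rewrite Fw_init // fin_numD => /andP.
Qed.

Lemma w_pt_prec (j k : nat) :
  (0 < k <= j)%N -> (j < n)%N -> w (pt n j.+1) (pt n k) = -oo.
Proof.
move=> /andP[k_gt0 k_le] j_lt; apply: w_ii; last by apply: prec_pt; lia.
by rewrite !card_pt //; lia.
Qed.

End Weights.

Theorem lemma6p3 (R : realDomainType) (n : nat)
  (w : {set 'I_n} -> {set 'I_n} -> \bar R) :
  no_pinfty w -> prop_i w -> prop_ii w -> prop_iii w -> prop_iv w -> prop_v w ->
  submodular (Fw w) ->
  forall j k : nat, (1 <= j < n)%N -> (1 <= k <= n)%N ->
    w (pt n j.+1) (pt n k) <= w (pt n j) (pt n k).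
Proof.
move=> w_fin w_i w_ii w_iii _ _ F_sub j k /andP[j_gt0 j_lt] /andP[k_gt0 k_le].
have [k_le_j | j_lt_k] := leqP k j.
  by rewrite w_pt_prec ?k_gt0 ?leNye.
case: j j_gt0 j_lt j_lt_k => [//|m] _ m1_lt k_gt.
have m_le : (m <= n)%N by lia.
have m1_le : (m.+1 <= n)%N by lia.
have [diag_m_fin w0_fin] := wdiag_fin w_fin w_i w_iii m_le.
have [diag_m1_fin _] := wdiag_fin w_fin w_i w_iii m1_le.
have := submodular_init_pt F_sub k_gt.
rewrite !Fw_init // !Fw_initU ?k_gt ?(ltnW k_gt) ?k_le //.
exact: leeD_cancel.
Qed.
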